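(* Let $S$ be a string of length $n$ and $\tau,k$ positive integers. Given random access to the sorted list of starting positions of the occurrences in $S$ of an aperiodic substring $P$ of $S$, together with the number of these occurrences, one can check whether $P$ is $(\tau,k)$-resilient in $S$ in $\mathcal{O}(\tau+k)$ time.
   Context: An integer $p>0$ is a period of $P$ if $P[t]=P[t+p]$ for all $t\in[0,|P|-p)$; $\mathsf{per}(P)$ is the smallest period; $P$ is aperiodic if $\mathsf{per}(P)>|P|/2$. Here, a substring $P$ of $S$ is $(\tau,k)$-resilient in $S$ if $P$ occurs at least $\tau$ times in every string obtained from $S$ by replacing the letters at at most $k$ positions with a letter $\#$ not in the alphabet of $S$. *)

From mathcomp Require Import all_boot.
Set Implicit Arguments. Unset Strict Implicit. Unset Printing Implicit Defensive.

Section Strings.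
Variable T : eqType.

Definition is_period (P : seq T) (p : nat) : bool :=
  (0 < p) && all (fun t => onth P t == onth P (t + p)) (iota 0 (size P - p)).

Lemma is_period_exists (P : seq T) : exists p, is_period P p.
Proof.
exists (size P).+1; rewrite /is_period /=.
by have -> : size P - (size P).+1 = 0 by apply/eqP; rewrite subn_eq0 leqnSn.
Qed.

Definition per (P : seq T) : nat := ex_minn (is_period_exists P).

Definition aperiodic (P : seq T) : bool := size P < 2 * per P.

End Strings.
Section Strings2.
Variable T : eqType.
Definition occ_pos (U : eqType) (S P : seq U) : seq nat :=
  [seq i <- iota 0 (size S).+1 |
     (i + size P <= size S) && (take (size P) (drop i S) == P)].

Definition is_substring (P S : seq T) : Prop := exists i, i \in occ_pos S P.

(* Replace the letters at positions in D by the fresh letter # (= None). *)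
Definition hash_replace (S : seq T) (D : seq nat) : seq (option T) :=
  [seq (if i \in D then None else onth S i) | i <- iota 0 (size S)].

Definition resilient (tau k : nat) (S P : seq T) : Prop :=
  forall D : seq nat, size D <= k ->
    tau <= size (occ_pos (hash_replace S D) (map Some P)).
End Strings2.

Inductive instr : Type :=
| IConst  (d c : nat)
| IAdd    (d a b : nat)
| ISub    (d a b : nat)        (* mem[d] := mem[a] - mem[b] (truncated)*)
| ILoad   (d a : nat)
| IStore  (a s : nat)
| IQuery  (d a : nat)
| IJumpLt (a b l : nat)
| IHalt.                       (* stop; the answer is (mem[0] != 0)    *)

Definition memory := nat -> nat.

Definition upd (m : memory) (d v : nat) : memory :=
  fun j => if j == d then v else m j.

(* run prog oracle fuel pc mem : Some final memory if the program halts
   within [fuel] executed instructions (each instruction costs 1, the final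
   IHalt included); running past the end of the program also halts. *)
Fixpoint run (prog : seq instr) (oracle : nat -> nat) (fuel pc : nat)
    (m : memory) : option memory :=
  match fuel with
  | 0 => None
  | fuel'.+1 =>
    match nth IHalt prog pc with
    | IConst d c => run prog oracle fuel' pc.+1 (upd m d c)
    | IAdd d a b => run prog oracle fuel' pc.+1 (upd m d (m a + m b))
    | ISub d a b => run prog oracle fuel' pc.+1 (upd m d (m a - m b))
    | ILoad d a => run prog oracle fuel' pc.+1 (upd m d (m (m a)))
    | IStore a s => run prog oracle fuel' pc.+1 (upd m (m a) (m s))
    | IQuery d a => run prog oracle fuel' pc.+1 (upd m d (oracle (m a)))
    | IJumpLt a b l =>
        run prog oracle fuel' (if m a < m b then l else pc.+1) m
    | IHalt => Some m
    end
  end.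

Definition init_mem (n m cnt tau k : nat) : memory :=
  fun j => match j with
           | 0 => n | 1 => m | 2 => cnt | 3 => tau | 4 => k | _ => 0 end.

From mathcomp Require Import all_boot zify.

(* Occurrences of an aperiodic P start more than |P|/2 apart, so one # destroys at
   most two of them, and two only when they are consecutive and less than |P| apart.
   Hence k #'s destroy at most min(2k, k + g) occurrences, where g is the size of a
   maximum set of disjoint such close consecutive pairs, which a greedy left-to-right
   scan computes; conversely that many can be destroyed.  So P is (tau,k)-resilient
   iff tau + min(2k, k + g) <= occ.  If occ >= tau + 2k this holds outright, and
   otherwise the greedy scan reads fewer than tau + 2k occurrences. *)

Set Implicit Arguments.
Unset Strict Implicit.
Unset Printing Implicit Defensive.

Lemma seq_ind2 (T : Type) (P : seq T -> Prop) :
  P [::] -> (forall x, P [:: x]) ->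
  (forall x y r, P r -> P (y :: r) -> P [:: x, y & r]) ->
  forall s, P s.
Proof.
move=> P0 P1 P2 s; suff [] : P s /\ forall x, P (x :: s) by [].
by elim: s => [|y r [Pr Pyr]]; split=> // x; apply: P2.
Qed.

Fixpoint close_pairs (m : nat) (l : seq nat) : nat :=
  match l with
  | x :: ((y :: r) as t) => if y - x < m then (close_pairs m r).+1 else close_pairs m t
  | _ => 0
  end.

Lemma close_pairs_cons2 m x y r : close_pairs m [:: x, y & r] =
  if y - x < m then (close_pairs m r).+1 else close_pairs m (y :: r).
Proof. by []. Qed.

Lemma close_pairs_drop m l i : i.+1 < size l ->
  close_pairs m (drop i l) =
  if nth 0 l i.+1 - nth 0 l i < m then (close_pairs m (drop i.+2 l)).+1
  else close_pairs m (drop i.+1 l).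
Proof.
move=> lt; rewrite (drop_nth 0 (ltnW lt)) (drop_nth 0 lt) close_pairs_cons2.
by rewrite -(drop_nth 0 lt).
Qed.

Lemma close_pairs_cons_bounds m x l :
  close_pairs m l <= close_pairs m (x :: l) <= (close_pairs m l).+1.
Proof.
elim: l x => [|y r IH] x //.
by rewrite close_pairs_cons2; case/andP: (IH y); case: ifP => _; lia.
Qed.

Lemma close_pairs_le_half m l : 2 * close_pairs m l <= size l.
Proof.
elim/seq_ind2: l => // x y r IHr IHyr.
have sizes : size [:: x, y & r] = (size r).+2 /\ size (y :: r) = (size r).+1 by [].
by rewrite close_pairs_cons2; case: ifP => _; lia.
Qed.

Definition hits (m d x : nat) := x <= d < x + m.

Lemma hits_self m x : 0 < m -> hits m x x.
Proof. by rewrite /hits; lia. Qed.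

Definition destroyed (m : nat) (D l : seq nat) :=
  count (fun x => has (hits m ^~ x) D) l.

Lemma destroyed_cons m D x l :
  destroyed m D (x :: l) = has (hits m ^~ x) D + destroyed m D l.
Proof. by []. Qed.

Lemma destroyed_add_deletion_le m d D l :
  destroyed m (d :: D) l <= count (hits m d) l + destroyed m D l.
Proof.
rewrite /destroyed -count_predUI; apply: leq_trans (leq_addr _ _).
by apply: sub_count => x.
Qed.

Lemma destroyed_rem_deletion m d D l : d \in D -> ~~ has (hits m d) l ->
  destroyed m D l = destroyed m (rem d D) l.
Proof.
move=> dD /hasPn dl; apply: eq_in_count => x /dl /negbTE hdx.
by rewrite (perm_has _ (perm_to_rem dD)) /= hdx.
Qed.

Lemma destroyed_add_deletion_ge m d D l : destroyed m D l <= destroyed m (d :: D) l.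
Proof. by apply: sub_count => x /= ->; rewrite orbT. Qed.

Definition spaced (p a b : nat) := a + p <= b.

Section SpacedOccurrences.
Variables m p : nat.
Hypotheses (m_gt0 : 0 < m) (m_lt_2p : m < 2 * p).

Lemma spaced_trans : transitive (spaced p).
Proof. rewrite /spaced => y x z; lia. Qed.

Lemma sorted_spaced_far x y r z :
  sorted (spaced p) [:: x, y & r] -> z \in r -> x + m < z.
Proof.
case/andP=> xy /(order_path_min spaced_trans) /allP yr /yr.
by move: xy; rewrite /spaced; lia.
Qed.

Lemma count_hits_le2 d l : sorted (spaced p) l -> count (hits m d) l <= 2.
Proof.
elim/seq_ind2: l => [//|x _|x y r _ IHyr sl] /=; first by case: (hits m d x).
case: (boolP (hits m d x)) => [hx|_]; last exact: IHyr (path_sorted sl).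
suff -> : count (hits m d) r = 0 by case: (hits m d y).
apply/eqP; rewrite -leqn0 leqNgt -has_count; apply/hasPn => z zr.
by move: hx (sorted_spaced_far sl zr); rewrite /hits; lia.
Qed.

Lemma destroyed_le_double D l : sorted (spaced p) l -> destroyed m D l <= 2 * size D.
Proof.
move=> sl; elim: D => [|d D IH] /=; first by rewrite /destroyed count_pred0.
by have := destroyed_add_deletion_le m d D l; have := count_hits_le2 d sl; lia.
Qed.

Lemma destroyed_le_pairs D l :
  sorted (spaced p) l -> destroyed m D l <= size D + close_pairs m l.
Proof.
elim/seq_ind2: l D => [|x|x y r IHr IHyr] D sl; first by rewrite /destroyed.
  by rewrite /destroyed /= !addn0; case: (boolP (has _ D)) => // /hasP [d]; case: D.
have s_yr := path_sorted sl; have s_r := path_sorted s_yr.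
rewrite destroyed_cons.
case: (boolP (has (hits m ^~ x) D)) => [/hasP [d dD hdx] | _]; last first.
  by have := IHyr D s_yr; case/andP: (close_pairs_cons_bounds m x (y :: r)); lia.
rewrite add1n; have D_gt0 : 0 < size D by case: (D) dD.
(* the cast makes [size] act on [seq nat], as in [IHr] and [IHyr], so lia sees one atom *)
have size_remD : size (rem d D : seq nat) = (size D).-1 by rewrite size_rem.
have miss_r : ~~ has (hits m d) r.
  by apply/hasPn => z /(sorted_spaced_far sl); move: hdx; rewrite /hits; lia.
rewrite close_pairs_cons2; case: ifP => close_xy.
- rewrite destroyed_cons (destroyed_rem_deletion dD miss_r); have := IHr (rem d D) s_r.
  by case: (has (hits m ^~ y) D) => /=; lia.
- have miss_yr : ~~ has (hits m d) (y :: r).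
    by rewrite /= negb_or miss_r andbT; move: hdx close_xy; rewrite /hits; lia.
  rewrite (destroyed_rem_deletion dD miss_yr).
  by have := IHyr (rem d D) s_yr; lia.
Qed.

Lemma exists_destroying k l : sorted (spaced p) l ->
  exists2 D, size D <= k &
    minn (size l) (minn (2 * k) (k + close_pairs m l)) <= destroyed m D l.
Proof.
elim/seq_ind2: l k => [|x|x y r IHr IHyr] [|k] sl;
  try by exists [::]; rewrite ?muln0 ?min0n ?minn0.
  by exists [:: x] => //; rewrite /destroyed /= hits_self //= geq_minl.
have s_yr := path_sorted sl; have s_r := path_sorted s_yr.
have sizes : size [:: x, y & r] = (size r).+2 /\ size (y :: r) = (size r).+1 by [].
rewrite close_pairs_cons2; case: ifP => close_xy.
- have [D' D'k D'destr] := IHr k s_r.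
  exists (y :: D'); first by [].
  have y_hits_x : hits m y x by move: sl close_xy; rewrite /= /spaced /hits; lia.
  rewrite !destroyed_cons /= y_hits_x hits_self //=.
  by have := destroyed_add_deletion_ge m y D' r; lia.
- have [DA DAk DAdestr] := IHyr k.+1 s_yr.
  have [DB DBk DBdestr] := IHyr k s_yr.
  have := close_pairs_le_half m (y :: r).
  case: (leqP (2 * k.+1) (size (y :: r))) => [many|few].
    by exists DA => //; rewrite destroyed_cons; lia.
  case: (leqP (k.+1 + close_pairs m (y :: r)) (size (y :: r))) => [many|few'].
    by exists DA => //; rewrite destroyed_cons; lia.
  exists (x :: DB); first by [].
  rewrite destroyed_cons [has _ (x :: DB)]/= hits_self // orTb.
  by have := destroyed_add_deletion_ge m x DB (y :: r); lia.
Qed.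
End SpacedOccurrences.

Section Occurrences.
Variable T : eqType.
Implicit Types S P : seq T.

Lemma map_Some_onth S : map Some S = map (onth S) (iota 0 (size S)).
Proof.
elim: S => [|x S IH] //=.
by rewrite -[1]addn0 iotaDl IH -map_comp.
Qed.

Lemma map_Some_window S i m : i + m <= size S ->
  map Some (take m (drop i S)) = map (onth S) (iota i m).
Proof.
move=> im_le; rewrite map_take map_drop map_Some_onth -map_drop -map_take.
by rewrite drop_iota take_iota add0n; congr (map _ (iota _ _)); lia.
Qed.

Lemma onth_occ S P i t : i \in occ_pos S P -> t < size P ->
  onth P t = onth S (i + t).
Proof.
rewrite mem_filter => /andP [/andP [_ /eqP P_at_i] _] tP.
by rewrite -{1}P_at_i !onthE map_take map_drop nth_take // nth_drop.
Qed.

Lemma per_le_period P q : is_period P q -> per P <= q.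
Proof. by rewrite /per; case: ex_minnP => p _; apply. Qed.

Lemma per_le_size P : 0 < size P -> per P <= size P.
Proof. by move=> P_gt0; apply: per_le_period; rewrite /is_period P_gt0 subnn. Qed.

Lemma occ_pos_gap S P i j : 0 < size P ->
  i \in occ_pos S P -> j \in occ_pos S P -> i < j -> i + per P <= j.
Proof.
move=> P_gt0 iS jS ij; case: (ltnP (j - i) (size P)) => [overlap|]; last first.
  by have := per_le_size P_gt0; lia.
suff : per P <= j - i by lia.
apply: per_le_period; apply/andP; split; first by rewrite subn_gt0.
apply/allP => t; rewrite mem_iota add0n => /andP [_ t_lt].
rewrite (onth_occ jS) ?(onth_occ iS); try lia.
by have -> : i + (t + (j - i)) = j + t by lia.
Qed.

Lemma occ_pos_spaced S P : 0 < size P -> sorted (spaced (per P)) (occ_pos S P).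
Proof.
move=> P_gt0; have occ_ltn : sorted ltn (occ_pos S P).
  by apply: sorted_filter; [exact: ltn_trans | exact: iota_ltn_sorted].
apply: (sub_in_sorted (P := mem (occ_pos S P))) occ_ltn; last exact/allP.
by move=> i j iS jS; exact: occ_pos_gap P_gt0 iS jS.
Qed.

Lemma window_hash_replace S D i m : i + m <= size S ->
  take m (drop i (hash_replace S D)) =
  [seq if j \in D then None else onth S j | j <- iota i m].
Proof.
move=> im_le; rewrite /hash_replace -map_drop -map_take drop_iota take_iota add0n.
by congr (map _ (iota _ _)); lia.
Qed.

Lemma occ_pos_hash_replace S P D :
  occ_pos (hash_replace S D) (map Some P) =
  [seq i <- occ_pos S P | ~~ has (hits (size P) ^~ i) D].
Proof.
have size_hash : size (hash_replace S D) = size S by rewrite size_map size_iota.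
rewrite /occ_pos -filter_predI size_map size_hash; apply: eq_filter => i /=.
case: (leqP (i + size P) (size S)) => [fits|]; last by rewrite andbF.
rewrite /= -[take _ (drop _ S) == P](inj_eq (inj_map (@Some_inj _))) map_Some_window //.
rewrite window_hash_replace //; case: (boolP (has _ D)) => /= [/hasP [d dD hit_d] | clean].
- apply/negbTE/eqP => window_eq; have : None \in map Some P.
    by rewrite -window_eq; apply/mapP; exists d; rewrite ?dD // mem_iota.
  by case/mapP.
- congr (_ == _); apply/eq_in_map => j; rewrite mem_iota => j_in.
  by case: ifP => // jD; move/hasPn: clean => /(_ j jD); rewrite /hits j_in.
Qed.

Lemma size_occ_pos_hash_replace S P D :
  size (occ_pos (hash_replace S D) (map Some P)) + destroyed (size P) D (occ_pos S P)
  = size (occ_pos S P).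
Proof. by rewrite occ_pos_hash_replace size_filter addnC count_predC. Qed.
End Occurrences.

Lemma resilientE (T : eqType) (S P : seq T) tau k :
  0 < tau -> 0 < size P -> aperiodic P ->
  resilient tau k S P <->
  tau + minn (2 * k) (k + close_pairs (size P) (occ_pos S P)) <= size (occ_pos S P).
Proof.
move=> tau_gt0 P_gt0 aperP; have occ_spaced := occ_pos_spaced S P_gt0.
split=> [resP | enough D Dk].
- have [D Dk many] := exists_destroying P_gt0 aperP k occ_spaced.
  by have := resP D Dk; have := size_occ_pos_hash_replace S P D; lia.
- have := size_occ_pos_hash_replace S P D.
  have := destroyed_le_double P_gt0 aperP D occ_spaced.
  have := destroyed_le_pairs P_gt0 aperP D occ_spaced.
  lia.
Qed.

(* Registers: 5 = tau + k, 6 = tau + 2k, 7 = scan index i, 8 = close pairs found so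
   far, 9, 10, 11 = the constants 1, 2, 0, so that [IJumpLt 11 9 l] jumps
   unconditionally.  Instructions 7-21 are the greedy scan computing [close_pairs]. *)
Definition resilience_test : seq instr :=
  [:: IAdd 5 3 4; IAdd 6 5 4; IJumpLt 2 6 5; IConst 0 1; IHalt;
      IConst 9 1; IConst 10 2;
      IJumpLt 7 2 9; IJumpLt 11 9 22;
      IAdd 12 7 9; IJumpLt 12 2 12; IJumpLt 11 9 20;
      IQuery 13 7; IQuery 14 12; ISub 15 14 13; IJumpLt 15 1 17; IJumpLt 11 9 20;
      IAdd 7 7 10; IAdd 8 8 9; IJumpLt 11 9 7;
      IAdd 7 7 9; IJumpLt 11 9 7;
      IAdd 16 5 8; IJumpLt 2 16 26; IConst 0 1; IHalt; IConst 0 0; IHalt].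

Ltac rewrite_registers := repeat match goal with
  | H : ?mem _ = _ |- _ => match type of mem with memory => rewrite H end
  end.

Ltac step := match goal with
  | |- context[run _ _ ?f _ _] =>
      let f' := fresh "f" in
      destruct f as [|f'];
      [exfalso; lia | rewrite /= /upd /=; rewrite_registers; rewrite /=]
  end.

Section Scan.
Variables (o : seq nat) (m base : nat).

Lemma scan_exit M (mem : memory) f :
  mem 7 = size o -> mem 8 = M -> mem 2 = size o -> mem 5 = base ->
  mem 9 = 1 -> mem 11 = 0 -> 6 <= f ->
  exists mf, run resilience_test (nth 0 o) f 7 mem = Some mf /\
    (mf 0 != 0 <-> base + M <= size o).
Proof.
move=> *; rewrite /resilience_test; step; rewrite ltnn; do 3 step.
by case: ltnP => ?; do 2 step; eexists; split.
Qed.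

Lemma scan_correct i M (mem : memory) f :
  i <= size o -> mem 7 = i -> mem 8 = M -> mem 1 = m -> mem 2 = size o ->
  mem 5 = base -> mem 9 = 1 -> mem 10 = 2 -> mem 11 = 0 ->
  10 * (size o - i) + 6 <= f ->
  exists mf, run resilience_test (nth 0 o) f 7 mem = Some mf /\
    (mf 0 != 0 <-> base + (M + close_pairs m (drop i o)) <= size o).
Proof.
move Hd : (size o - i) => d; elim/ltn_ind: d i M mem f Hd => d IH i M mem f d_eq.
move=> i_le r7 r8 r1 r2 r5 r9 r10 r11 fuel.
have [i_eq | i_lt] : i = size o \/ i < size o by lia.
  by rewrite i_eq drop_size addn0; apply: scan_exit; lia.
rewrite /resilience_test; step; rewrite i_lt; do 2 step; rewrite addn1.
case: (ltnP i.+1 (size o)) => [i1_lt | i1_ge].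
- rewrite close_pairs_drop //; do 4 step.
  case: (ltnP (nth 0 o i.+1 - nth 0 o i) m) => close; do 3 step.
  + rewrite -[M + (close_pairs _ _).+1]addSnnS.
    by apply: (IH (size o - i.+2)) => //=; rewrite ?r7 ?r8; lia.
  + by apply: (IH (size o - i.+1)) => //=; rewrite ?r7; lia.
- have -> : drop i o = [:: nth 0 o i] by rewrite (drop_nth 0 i_lt) drop_oversize.
  have -> : close_pairs m [:: nth 0 o i] = close_pairs m (drop i.+1 o).
    by rewrite drop_oversize.
  by do 3 step; apply: (IH (size o - i.+1)) => //=; rewrite ?r7; lia.
Qed.
End Scan.

Lemma resilience_test_correct (o : seq nat) n m tau k : 0 < tau -> 0 < k ->
  exists mf, run resilience_test (nth 0 o) (30 * (tau + k)) 0
      (init_mem n m (size o) tau k) = Some mf /\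
    (mf 0 != 0 <-> tau + minn (2 * k) (k + close_pairs m o) <= size o).
Proof.
move=> tau_gt0 k_gt0; have : 11 + 10 * (tau + 2 * k) <= 30 * (tau + k) by lia.
move: (30 * (tau + k)) => f fuel; rewrite /resilience_test; do 3 step.
case: ltnP => few; do 2 step.
- have -> : (tau + minn (2 * k) (k + close_pairs m o) <= size o) =
            (tau + k + (0 + close_pairs m (drop 0 o)) <= size o).
    by rewrite drop0; apply/idP/idP; lia.
  by apply: (scan_correct (base := tau + k)) => //=; lia.
- by eexists; split => //=; lia.
Qed.

Theorem lemma4 :
  exists (prog : seq instr) (c : nat),
  forall (T : eqType) (S P : seq T) (tau k : nat),
    0 < tau -> 0 < k ->
    0 < size P -> is_substring P S -> aperiodic P ->
    exists mfinal : memory,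
      run prog (fun i => nth 0 (occ_pos S P) i) (c * (tau + k)) 0
          (init_mem (size S) (size P) (size (occ_pos S P)) tau k)
        = Some mfinal /\
      ((mfinal 0 != 0) <-> resilient tau k S P).
Proof.
exists resilience_test, 30 => T S P tau k tau_gt0 k_gt0 P_gt0 _ aperP.
have [mf [run_eq answer]] :=
  resilience_test_correct (occ_pos S P) (size S) (size P) tau_gt0 k_gt0.
by exists mf; split => //; rewrite answer resilientE.
Qed.
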